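(* For every $n\ge 1$, every $\kappa\le\frac{n}{2n-1}$ and every doubly stochastic $n\times n$ matrix $\mathcal M$, there exists a directed $(2n-1)$-regular multigraph $G$ on $[n]$ whose direct throughput with respect to $\mathcal M$ is at least $\kappa$ (i.e., $G$ directly hosts $\kappa\mathcal M$).
   Context: Let $n\ge 1$ and $[n]=\{1,\dots,n\}$. Networks are finite directed multigraphs on vertex set $[n]$; self-loops and parallel arcs are allowed. A directed multigraph is directed $r$-regular if every vertex has exactly $r$ outgoing and exactly $r$ incoming arcs (a self-loop at $v$ counts as one outgoing and one incoming arc of $v$). An $n\times n$ matrix is doubly stochastic if all entries are nonnegative and every row and every column sums to $1$. In a directed $(2n-1)$-regular multigraph $G$ on $[n]$ every arc has capacity $\frac{1}{2n-1}$. $G$ directly hosts a nonnegative $n\times n$ matrix $\mathcal M=(a_{i,j})$ if the demand $a_{u,v}$ from $u$ to $v$ can be routed entirely on arcs from $u$ to $v$ without exceeding capacities, i.e., equivalently, if $a_{u,v}\le \frac{m_{u,v}}{2n-1}$ for all $u,v\in[n]$, where $m_{u,v}$ is the number of arcs from $u$ to $v$ in $G$. The direct throughput of $G$ with respect to a doubly stochastic $\mathcal M$ is the largest $\theta$ such that $G$ directly hosts $\theta\mathcal M$. *)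

From HB Require Import structures.
From mathcomp Require Import all_boot all_order all_algebra.
From mathcomp Require Import reals.
Set Implicit Arguments. Unset Strict Implicit. Unset Printing Implicit Defensive.
Import Order.TTheory GRing.Theory Num.Theory.
Local Open Scope ring_scope.

(* A finite directed multigraph (self-loops and parallel arcs allowed) on the
   vertex set 'I_n (= [n], shifted to 0..n-1) is given by its arc multiplicities:
   [G u v] is the number m_{u,v} of arcs from u to v. *)
Definition multidigraph (n : nat) := 'I_n -> 'I_n -> nat.

(* directed r-regular: every vertex has out-degree r and in-degree r
   (a self-loop counts once as outgoing and once as incoming). *)
Definition directed_regular (n r : nat) (G : multidigraph n) : Prop :=
  (forall u : 'I_n, (\sum_(v < n) G u v)%N = r) /\
  (forall v : 'I_n, (\sum_(u < n) G u v)%N = r).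

Definition doubly_stochastic (R : numDomainType) (n : nat) (M : 'M[R]_n) : Prop :=
  (forall i j, 0 <= M i j) /\
  (forall i, \sum_(j < n) M i j = 1) /\
  (forall j, \sum_(i < n) M i j = 1).

(* G (a (2n-1)-regular multigraph, each arc of capacity 1/(2n-1)) directly
   hosts the demand matrix A. *)
Definition directly_hosts (R : numFieldType) (n : nat) (G : multidigraph n)
    (A : 'M[R]_n) : Prop :=
  forall u v : 'I_n, A u v <= (G u v)%:R / (2 * n - 1)%N%:R.

From HB Require Import structures.
From mathcomp Require Import all_boot all_order all_algebra.
From mathcomp Require Import reals zify.
Import Order.TTheory GRing.Theory Num.Theory.

Set Implicit Arguments.
Unset Strict Implicit.
Unset Printing Implicit Defensive.

(* Round every entry of [n M] up.  A row of [M] sums to 1, so the rounded row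
   sums to less than [n + n], i.e. at most [2n - 1]; the same holds for columns.
   A nonnegative integer matrix whose row and column sums are bounded by [r]
   can always be increased entrywise to one whose row and column sums all
   equal [r]: while some row is deficient, so is some column (both sides count
   the same total), and one arc between them can be added.  Each arc then has
   capacity [1/(2n-1)] and [kappa M u v <= n M u v / (2n-1)]. *)

Lemma sum_eq_card_mul (T : finType) (r : nat) (f : T -> nat) :
  (forall i, f i <= r) -> \sum_i f i = #|T| * r -> forall i, f i = r.
Proof.
move=> f_le sum_f i.
have [_] := leqif_sum (fun i (_ : true) => leqif_eq (f_le i)).
rewrite sum_f sum_nat_const eqxx => /esym/forallP/(_ i).
by move/eqP.
Qed.

Section RegularCompletion.

Variables n r : nat.
Implicit Types G : multidigraph n.

Definition outdeg G u := \sum_(v < n) G u v.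
Definition indeg G v := \sum_(u < n) G u v.
Definition arc_count G := \sum_(u < n) outdeg G u.

Lemma arc_countE G : arc_count G = \sum_(v < n) indeg G v.
Proof. exact: exchange_big. Qed.

Definition add_arc G u0 v0 : multidigraph n :=
  fun u v => G u v + ((u == u0) && (v == v0)).

Lemma outdeg_add_arc G u0 v0 u :
  outdeg (add_arc G u0 v0) u = outdeg G u + (u == u0).
Proof.
rewrite /outdeg big_split /=; congr (_ + _).
rewrite (bigD1 v0) //= eqxx andbT big1 ?addn0 //.
by move=> v /negbTE ->; rewrite andbF.
Qed.

Lemma indeg_add_arc G u0 v0 v :
  indeg (add_arc G u0 v0) v = indeg G v + (v == v0).
Proof.
rewrite /indeg big_split /=; congr (_ + _).
rewrite (bigD1 u0) //= eqxx big1 ?addn0 //.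
by move=> u /negbTE ->.
Qed.

Lemma arc_count_add_arc G u0 v0 :
  arc_count (add_arc G u0 v0) = (arc_count G).+1.
Proof.
rewrite /arc_count (eq_bigr _ (fun u _ => outdeg_add_arc G u0 v0 u)).
rewrite big_split /= -addn1; congr (_ + _).
rewrite (bigD1 u0) //= eqxx big1 //.
by move=> u /negbTE ->.
Qed.

Hypotheses (G : multidigraph n)
  (outdeg_le : forall u, outdeg G u <= r) (indeg_le : forall v, indeg G v <= r).

Lemma arc_count_le : arc_count G <= n * r.
Proof.
by rewrite -[n in n * r]card_ord -sum_nat_const leq_sum.
Qed.

Lemma indeg_deficient u0 : outdeg G u0 < r -> exists v0, indeg G v0 < r.
Proof.
move=> out_lt; apply/existsP; apply: contraLR out_lt.
rewrite negb_exists -leqNgt => /forallP in_ge.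
have in_r v : indeg G v = r by apply/eqP; rewrite eqn_leq indeg_le leqNgt in_ge.
have sum_out : \sum_u outdeg G u = #|'I_n| * r.
  by rewrite -/(arc_count G) arc_countE (eq_bigr _ (fun v _ => in_r v)) sum_nat_const.
by rewrite (sum_eq_card_mul outdeg_le sum_out).
Qed.

Lemma regular_of_outdeg (out_r : forall u, outdeg G u = r) :
  directed_regular r G.
Proof.
have sum_in : \sum_v indeg G v = #|'I_n| * r.
  by rewrite -arc_countE /arc_count (eq_bigr _ (fun u _ => out_r u)) sum_nat_const.
by split=> // v; exact: sum_eq_card_mul indeg_le sum_in v.
Qed.

End RegularCompletion.

Lemma regular_completion n r (G : multidigraph n) :
  (forall u, outdeg G u <= r) -> (forall v, indeg G v <= r) ->
  exists G' : multidigraph n,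
    (forall u v, G u v <= G' u v) /\ directed_regular r G'.
Proof.
have [k] := ubnP (n * r - arc_count G); elim: k G => // k IH G.
move=> deficit_lt outdeg_le indeg_le.
case: (pickP (fun u => outdeg G u < r)) => [u0 out_lt | full].
- have [v0 in_lt] := indeg_deficient outdeg_le indeg_le out_lt.
  have outdeg_le' u : outdeg (add_arc G u0 v0) u <= r.
    by rewrite outdeg_add_arc; have [->|_] := eqVneq u u0; rewrite ?addn1 ?addn0.
  have [||G' [le_G' reg_G']] := IH (add_arc G u0 v0) _ outdeg_le'.
  + have := arc_count_le outdeg_le'.
    by rewrite arc_count_add_arc; lia.
  + by move=> v; rewrite indeg_add_arc; have [->|_] := eqVneq v v0; rewrite ?addn1 ?addn0.
  exists G'; split=> // u v; apply: leq_trans (le_G' u v); exact: leq_addr.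
- exists G; split=> //; apply: regular_of_outdeg indeg_le _ => u.
  by apply/eqP; rewrite eqn_leq outdeg_le leqNgt full.
Qed.

Local Open Scope ring_scope.

Section CeilNat.

Variable R : archiRealDomainType.

Definition ceil_nat (x : R) : nat := `|Num.ceil x|%N.

Lemma ceil_natE (x : R) : 0 <= x -> (ceil_nat x)%:R = (Num.ceil x)%:~R :> R.
Proof.
move=> x_ge0; rewrite natr_absz ger0_norm // ceil_ge0.
by apply: lt_le_trans x_ge0; rewrite ltrN10.
Qed.

Lemma ceil_nat_ge (x : R) : 0 <= x -> x <= (ceil_nat x)%:R.
Proof. by move=> x_ge0; rewrite ceil_natE // ceil_ge. Qed.

Lemma ceil_nat_lt (x : R) : 0 <= x -> (ceil_nat x)%:R < x + 1.
Proof.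
move=> x_ge0; rewrite ceil_natE // -ltrBlDr.
by have := ceilB1_lt x; rewrite intrD.
Qed.

Lemma sum_ceil_nat_scaled_le n (p : 'I_n -> R) :
  (forall i, 0 <= p i) -> \sum_(i < n) p i = 1 ->
  (\sum_(i < n) ceil_nat (n%:R * p i) <= 2 * n - 1)%N.
Proof.
move=> p_ge0 sum_p.
have n_gt0 : (0 < n)%N.
  by case: n p sum_p {p_ge0} => // p; rewrite big_ord0 => /esym/eqP; rewrite oner_eq0.
have lt_2n : (\sum_(i < n) ceil_nat (n%:R * p i))%:R < (2 * n)%:R :> R.
  have has_ord : has predT (index_enum 'I_n).
    by apply/hasP; exists (Ordinal n_gt0); rewrite ?mem_index_enum.
  rewrite natr_sum; apply: lt_le_trans (ltr_sum has_ord _) _.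
    by move=> i _; apply: ceil_nat_lt; rewrite mulr_ge0.
  rewrite big_split /= -mulr_sumr sum_p mulr1 sumr_const card_ord.
  by rewrite -natrD addnn -mul2n.
by move: lt_2n; rewrite ltr_nat; lia.
Qed.

End CeilNat.

Definition ceil_demand (R : archiRealDomainType) n (M : 'M[R]_n) :
  multidigraph n := fun u v => ceil_nat (n%:R * M u v).

Lemma directly_hosts_above_ceil_demand (R : archiRealFieldType) n
    (kappa : R) (M : 'M[R]_n) (G : multidigraph n) :
  (0 < n)%N -> kappa <= n%:R / (2 * n - 1)%N%:R -> (forall u v, 0 <= M u v) ->
  (forall u v, (ceil_demand M u v <= G u v)%N) ->
  directly_hosts G (kappa *: M).
Proof.
move=> n_gt0 le_kappa M_ge0 le_G u v; rewrite mxE.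
have deg_gt0 : 0 < (2 * n - 1)%N%:R :> R by rewrite ltr0n; lia.
apply: le_trans (ler_wpM2r (M_ge0 u v) le_kappa) _.
rewrite mulrAC ler_pM2r ?invr_gt0 //.
apply: le_trans (ceil_nat_ge (mulr_ge0 (ler0n _ n) (M_ge0 u v))) _.
by rewrite ler_nat le_G.
Qed.

Theorem proposition3p5 (R : realType) (n : nat) (kappa : R) (M : 'M[R]_n) :
  (0 < n)%N ->
  kappa <= n%:R / (2 * n - 1)%N%:R ->
  doubly_stochastic M ->
  exists G : multidigraph n,
    directed_regular (2 * n - 1) G /\ directly_hosts G (kappa *: M).
Proof.
move=> n_gt0 le_kappa [M_ge0 [row_sum col_sum]].
have [G [le_G reg_G]] : exists G : multidigraph n,
    (forall u v, ceil_demand M u v <= G u v)%N /\ directed_regular (2 * n - 1) G.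
  apply: regular_completion => [u|v].
  - exact: sum_ceil_nat_scaled_le (M_ge0 u) (row_sum u).
  - exact: sum_ceil_nat_scaled_le (M_ge0^~ v) (col_sum v).
exists G; split=> //.
exact: directly_hosts_above_ceil_demand.
Qed.
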